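(* Let $\Gamma$ be a finite simple graph on $n$ vertices and let $\alpha,\beta\models n$ be compositions such that $\beta$ refines $\alpha$ (i.e. $\alpha$ is obtained from $\beta$ by adding together some groups of consecutive parts). Then $\zeta_\alpha(\Gamma)\le\zeta_\beta(\Gamma)$.
   Context: For a coloring $\lambda:V\to\mathbb{N}$ of a finite simple graph $\Gamma$ with values $i_1<\dots<i_k$, let $I_j=\lambda^{-1}(\{i_1,\dots,i_j\})$, $I_0=\emptyset$. It is ordered if for each $j$, no two distinct vertices $u,w$ with $\lambda(u)=\lambda(w)=i_j$ are joined by a path in $\Gamma$ (possibly a single edge) all of whose internal vertices lie in $I_{j-1}$. Its type is $(|\lambda^{-1}(i_1)|,\dots,|\lambda^{-1}(i_k)|)$. For a composition $\alpha$ of $n$ with $k(\alpha)$ parts, $\zeta_\alpha(\Gamma)$ is the number of surjective ordered colorings $\lambda:V\to\{1,\dots,k(\alpha)\}$ of type $\alpha$. *)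

From Stdlib Require Import ClassicalEpsilon.
From mathcomp Require Import all_boot.
Set Implicit Arguments. Unset Strict Implicit. Unset Printing Implicit Defensive.

Definition pbool (P : Prop) : bool :=
  if excluded_middle_informative P then true else false.

Definition simple_graph (V : finType) (e : rel V) : Prop :=
  symmetric e /\ irreflexive e.

Definition is_composition (n : nat) (a : seq nat) : Prop :=
  all (fun x => 0 < x) a /\ sumn a = n.

(* beta refines alpha: alpha is obtained from beta by adding together
   consecutive groups of parts, i.e. there is a composition g of size beta
   with size alpha parts, with alpha = sums of the blocks of beta cut by g. *)
Definition refines (beta alpha : seq nat) : Prop :=
  exists g : seq nat, is_composition (size beta) g /\
    alpha = map sumn (reshape g beta).

(* Colorings with values in {0,...,k-1} (standing for 1..k). *)
Section Colorings.
Variables (V : finType) (e : rel V) (k : nat).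

Definition ordered_coloring (f : V -> 'I_k) : Prop :=
  forall (u w : V) (q : seq V), u != w -> f u = f w ->
    path e u (rcons q w) -> ~~ all (fun x => (f x < f u)%N) q.

Definition surjective_coloring (f : V -> 'I_k) : bool :=
  [forall i : 'I_k, exists v : V, f v == i].

Definition coloring_type (f : V -> 'I_k) : seq nat :=
  [seq #|[pred v | f v == i]| | i <- enum 'I_k].

End Colorings.

Definition zeta (V : finType) (e : rel V) (alpha : seq nat) : nat :=
  #|[pred f : {ffun V -> 'I_(size alpha)} |
       [&& surjective_coloring f,
           pbool (ordered_coloring e f)
         & coloring_type f == alpha]]|.

(** An ordered coloring [f] of type [alpha] can be refined to one of type
  [beta]: the colours of [beta] that merge into colour [j] of [alpha] form an
  interval, and the merge map [phi] on colours is monotone, so splitting each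
  class [f^-1(j)] into pieces of the prescribed sizes gives a coloring [g] of
  type [beta] with [f = phi \o g]. A path whose interior has [g]-colours below
  [g u] has [f]-colours at most [f u] inside, and an ordered [f] excludes
  those paths as well, so [g] is ordered. Composing with [phi] thus maps the
  colorings counted by [zeta beta] onto those counted by [zeta alpha]. *)

From Stdlib Require Import ClassicalEpsilon.
From mathcomp Require Import all_boot zify.

Set Implicit Arguments.
Unset Strict Implicit.
Unset Printing Implicit Defensive.

Lemma pboolP (P : Prop) : reflect P (pbool P).
Proof.
by rewrite /pbool; case: excluded_middle_informative => ?; constructor.
Qed.

Lemma sumn_take_nth (m : nat) (s : seq nat) :
  sumn (take m s) = \sum_(i < m) nth 0 s i.
Proof.
elim: s m => [|x s IHs] [|m] /=; rewrite ?big_ord0 //.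
  by rewrite big1 // => i _; rewrite nth_nil.
by rewrite big_ord_recl IHs.
Qed.

Lemma sum_nth_range (s m : nat) (t : seq nat) :
  \sum_(s <= i < s + m) nth 0 t i = sumn (take m (drop s t)).
Proof.
rewrite sumn_take_nth -{1}[s]add0n big_addn addKn big_mkord.
by apply: eq_bigr => i _; rewrite nth_drop addnC.
Qed.

Lemma reshape_indexE (sh : seq nat) (i j : nat) : i < sumn sh ->
  (reshape_index sh i == j) =
  (sumn (take j sh) <= i < sumn (take j sh) + nth 0 sh j).
Proof.
move=> i_lt; have := reshape_offsetP i_lt; have := reshape_indexK sh i.
rewrite /flatten_index /reshape_offset => idxK off_lt.
apply/idP/idP => [/eqP <-| /andP [lo hi]]; first lia.
have -> : i = flatten_index sh j (i - sumn (take j sh)).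
  by rewrite /flatten_index; lia.
by rewrite flatten_indexKl //; lia.
Qed.

Lemma sum_fibre_reshape_index (sh s : seq nat) (j : nat) :
  sumn sh = size s ->
  \sum_(i < size s | reshape_index sh i == j) nth 0 s i
    = sumn (nth [::] (reshape sh s) j).
Proof.
move=> sh_s; rewrite nth_reshape -sum_nth_range.
set lo := sumn (take j sh); set m := nth 0 sh j.
have hi_le : lo + m <= size s.
  rewrite -sh_s /lo /m; have [j_lt | j_ge] := ltnP j (size sh).
    rewrite -sumn_rcons -take_nth // -{2}(cat_take_drop j.+1 sh) sumn_cat.
    exact: leq_addr.
  by rewrite nth_default // take_oversize ?addn0.
rewrite big_geq_mkord (big_ord_widen_cond _ _ _ hi_le).
by apply: eq_bigl => i; rewrite reshape_indexE ?sh_s.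
Qed.

Lemma card_sep_setD1 (V : finType) (S : {set V}) (P : pred V) (v : V) :
  v \in S -> #|[set x in S | P x]| = #|[set x in S :\ v | P x]| + P v.
Proof.
move=> Sv; rewrite (cardsD1 v) inE Sv addnC; congr (_ + _).
by apply: eq_card => x; rewrite !inE andbA.
Qed.

Lemma sum_fibre_decr (I J : finType) (phi : I -> J) (w : I -> nat)
    (i1 : I) (j : J) :
  0 < w i1 ->
  \sum_(i | phi i == j) w i
    = \sum_(i | phi i == j) (w i - (i == i1)) + (phi i1 == j).
Proof.
move=> w_gt0; rewrite sumnB => [|i _]; last by case: eqP => // ->.
have -> : \sum_(i | phi i == j) (i == i1) = (phi i1 == j).
  have [fib_i1 | nfib_i1] := boolP (phi i1 == j).
    by rewrite (bigD1 i1) //= eqxx big1 // => i /andP [_ /negbTE ->].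
  by apply: big1 => i; case: (eqVneq i i1) => // -> fib; rewrite fib in nfib_i1.
rewrite subnK //; have [fib_i1 | //] := boolP (phi i1 == j).
by rewrite (bigD1 i1) //= ltn_addr.
Qed.

Lemma exists_lift_with_class_sizes (V I J : finType) (i0 : I)
    (f : V -> J) (phi : I -> J) (S : {set V}) (w : I -> nat) :
  (forall j, #|[set v in S | f v == j]| = \sum_(i | phi i == j) w i) ->
  exists g : V -> I, (forall v, v \in S -> phi (g v) = f v) /\
                     (forall i, #|[set v in S | g v == i]| = w i).
Proof.
elim: {S}#|S| {-2}S (erefl #|S|) w => [|n IH] S card_S w fibre_w.
  have no_S : forall P : pred V, #|[set v in S | P v]| = 0.
    move=> P; apply/eqP; rewrite -leqn0 -card_S subset_leq_card //.
    by apply/subsetP => x; rewrite inE => /andP [].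
  exists (fun=> i0); split=> [v Sv | i].
    by move: card_S; rewrite (cardsD1 v) Sv.
  have := fibre_w (phi i); rewrite no_S (bigD1 i) //=.
  by case: (w i).
have /card_gt0P [v Sv] : 0 < #|S| by rewrite card_S.
have [i1 /andP [/eqP phi_i1 w_i1]] : exists i, (phi i == f v) && (0 < w i).
  apply/existsP; apply: contraT => /existsPn no_i1.
  have := fibre_w (f v).
  rewrite (card_sep_setD1 _ Sv) eqxx addn1 big1 // => i fib.
  by have := no_i1 i; rewrite fib /=; case: (w i).
pose w' i := w i - (i == i1).
have [||g [phi_g card_g]] := IH (S :\ v) _ w'.
- by move: card_S; rewrite (cardsD1 v) Sv add1n => -[].
- by move=> j; apply: (@addIn (f v == j)); rewrite -card_sep_setD1 // fibre_w
    (sum_fibre_decr _ _ w_i1) phi_i1.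
exists (fun x => if x == v then i1 else g x); split=> [x Sx | i].
  by case: eqVneq => [-> //| neq_xv]; rewrite phi_g // !inE neq_xv.
rewrite (card_sep_setD1 _ Sv) eqxx /= [i1 == i]eq_sym.
rewrite -[w i](@subnK (i == i1)).
  congr (_ + _); rewrite -[_ - _]/(w' i) -card_g.
  by apply: eq_card => x; rewrite !inE; case: eqVneq.
by case: eqVneq => // ->.
Qed.

Section Colorings.
Variables (V : finType) (e : rel V).

Lemma ordered_coloring_weak k (f : V -> 'I_k) : ordered_coloring e f ->
  forall u w q, u != w -> f u = f w -> path e u (rcons q w) ->
  ~~ all (fun x => f x <= f u) q.
Proof.
(* At the first interior vertex [x] with [f x = f u], either [x = u] and we
   restart from there, or the path up to [x] is already excluded by [ord_f]. *)
move=> ord_f u w q neq_uw f_uw path_q; apply/negP => leq_q.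
suff no_path p : all (fun x => f x < f u) p -> ~~ path e u (p ++ rcons q w).
  by have := no_path [::] isT; rewrite path_q.
elim: q leq_q {path_q} p => [_|x q IH /andP [le_xu leq_q]] p lt_p.
  by rewrite cats1; apply: contraL lt_p; apply: ord_f.
have [lt_xu | ge_xu] := ltnP (f x) (f u).
  by rewrite -cat_rcons; apply: IH; rewrite // all_rcons lt_xu.
have f_xu : f x = f u by apply/val_inj/eqP; rewrite eqn_leq le_xu.
rewrite cat_path /=; apply/negP => /and3P [path_p e_x path_q].
have [eq_xu | neq_xu] := eqVneq x u.
  by move: path_q; rewrite eq_xu; apply/negP/(IH leq_q [::]).
have := ord_f u x p; rewrite eq_sym neq_xu f_xu rcons_path path_p e_x lt_p.
by move/(_ isT erefl isT).
Qed.

Lemma ordered_coloring_refine k l (phi : 'I_k -> 'I_l)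
    (f : V -> 'I_l) (g : V -> 'I_k) :
  {homo phi : i j / i <= j} -> (forall v, phi (g v) = f v) ->
  ordered_coloring e f -> ordered_coloring e g.
Proof.
move=> phi_mono phi_g ord_f u w q neq_uw g_uw path_q; apply/negP => lt_q.
have := ordered_coloring_weak ord_f neq_uw; rewrite -!phi_g g_uw.
move=> /(_ _ erefl path_q) /negP; apply; apply/allP => x /(allP lt_q) /ltnW.
by rewrite -!phi_g -g_uw; apply: phi_mono.
Qed.

Lemma coloring_typeP k (f : V -> 'I_k) (s : seq nat) :
  reflect (size s = k /\ forall i : 'I_k, #|[pred v | f v == i]| = nth 0 s i)
          (coloring_type f == s).
Proof.
apply: (iffP eqP) => [<- | [size_s card_f]].
  split=> [|i]; first by rewrite size_map size_enum_ord.
  by rewrite (nth_map i) ?size_enum_ord // nth_ord_enum.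
apply: (@eq_from_nth _ 0); first by rewrite size_map size_enum_ord.
move=> i; rewrite size_map size_enum_ord => lt_ik.
rewrite (nth_map (Ordinal lt_ik)) ?size_enum_ord //.
by rewrite -[i]/(val (Ordinal lt_ik)) nth_ord_enum card_f.
Qed.

Lemma zeta_le_fibre_sums (alpha beta : seq nat)
    (phi : 'I_(size beta) -> 'I_(size alpha)) (i0 : 'I_(size beta)) :
  {homo phi : i j / i <= j} -> all (fun x => 0 < x) beta ->
  (forall j : 'I_(size alpha),
     nth 0 alpha j = \sum_(i | phi i == j) nth 0 beta i) ->
  zeta e alpha <= zeta e beta.
Proof.
move=> phi_mono beta_pos alpha_fibres.
pose refine (g : {ffun V -> 'I_(size beta)}) := [ffun v => phi (g v)].
rewrite /zeta; set A := [pred f | _]; set B := [pred g | _].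
apply: (leq_trans _ (leq_imset_card refine B)).
apply: subset_leq_card; apply/subsetP.
move=> f /and3P [_ ord_f /coloring_typeP [_ card_f]].
have [|g [phi_g card_g]] :=
    @exists_lift_with_class_sizes _ _ _ i0 f phi [set: V]
      (fun i => nth 0 beta i).
  by move=> j; rewrite -alpha_fibres -card_f; apply: eq_card => v; rewrite !inE.
have card_g' i : #|[pred v | [ffun v => g v] v == i]| = nth 0 beta i.
  by rewrite -card_g; apply: eq_card => v; rewrite !inE ffunE.
apply/imsetP; exists [ffun v => g v].
  2: by apply/ffunP => v; rewrite !ffunE phi_g.
rewrite inE; apply/and3P; split.
- apply/forallP => i.
  have /card_gt0P [v] : 0 < #|[pred v | [ffun v => g v] v == i]|.
    by rewrite card_g'; apply: (all_nthP 0 beta_pos).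
  by rewrite inE => g_v; apply/existsP; exists v.
- apply/pboolP/(ordered_coloring_refine phi_mono _ (pboolP _ ord_f)) => v.
  by rewrite ffunE phi_g.
- by apply/coloring_typeP.
Qed.

End Colorings.

Section RefinementMap.
Variables (gr beta : seq nat).
Hypothesis gr_beta : sumn gr = size beta.

Lemma reshape_index_ord (i : 'I_(size beta)) :
  reshape_index gr i < size (map sumn (reshape gr beta)).
Proof. by rewrite size_map size_reshape reshape_indexP ?gr_beta. Qed.

Definition refinement_map (i : 'I_(size beta)) :
  'I_(size (map sumn (reshape gr beta))) := Ordinal (reshape_index_ord i).

Lemma refinement_map_mono : {homo refinement_map : i j / i <= j}.
Proof.
by move=> i j; rewrite /= (reshape_leq gr) => /orP [/ltnW | /andP [/eqP ->]].
Qed.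

Lemma nth_refinement_fibre (j : 'I_(size (map sumn (reshape gr beta)))) :
  nth 0 (map sumn (reshape gr beta)) j
    = \sum_(i | refinement_map i == j) nth 0 beta i.
Proof.
rewrite (nth_map [::]) -?sum_fibre_reshape_index //.
by rewrite -(size_map sumn).
Qed.

End RefinementMap.

Theorem mainTheorem13 (V : finType) (e : rel V) (alpha beta : seq nat) :
  simple_graph e ->
  is_composition #|V| alpha ->
  is_composition #|V| beta ->
  refines beta alpha ->
  zeta e alpha <= zeta e beta.
Proof.
move=> _ _ [beta_pos _] [gr [[gr_pos gr_beta] ->]].
have [beta0 | beta_gt0] := posnP (size beta).
  have -> : gr = [::].
    by case: gr gr_pos gr_beta => //= x gr /andP [x_gt0 _]; rewrite beta0; lia.
  by rewrite (size0nil beta0).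
apply: (zeta_le_fibre_sums e (Ordinal beta_gt0) (refinement_map_mono gr_beta)).
  exact: beta_pos.
exact: nth_refinement_fibre.
Qed.
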